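(* Let $n\ge 3$ and let $p(q)=q^n+a_{n-2}q^{n-2}+\dots+a_1q+a_0$ with $a_0,\dots,a_{n-2}\in\mathbb{H}$ and $a_{n-2}\neq 0$. Put $\lambda=\big(\max_{0\le j\le n-2}|a_j|\big)^{1/n}$. Then every zero $q\in\mathbb{H}$ of $p$ satisfies $$|q|\le \lambda+\lambda^2+\lambda^3+\dots+\lambda^{n-1}.$$
   Context: $\mathbb{H}$ denotes the real quaternions with the Euclidean norm $|q|=\sqrt{q\bar q}$. The polynomial $p$ has coefficients written to the left of the powers and is evaluated at $q\in\mathbb{H}$ by direct substitution; a zero of $p$ is a $q\in\mathbb{H}$ with $p(q)=0$. *)

From Stdlib Require Import Reals List.
Open Scope R_scope.

Record quat : Type := Quat { qr : R; qi : R; qj : R; qk : R }.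

Definition qzero : quat := Quat 0 0 0 0.
Definition qone : quat := Quat 1 0 0 0.

Definition qadd (p q : quat) : quat :=
  Quat (qr p + qr q) (qi p + qi q) (qj p + qj q) (qk p + qk q).

(* Hamilton product, i^2 = j^2 = k^2 = ijk = -1 *)
Definition qmul (p q : quat) : quat :=
  Quat (qr p * qr q - qi p * qi q - qj p * qj q - qk p * qk q)
       (qr p * qi q + qi p * qr q + qj p * qk q - qk p * qj q)
       (qr p * qj q - qi p * qk q + qj p * qr q + qk p * qi q)
       (qr p * qk q + qi p * qj q - qj p * qi q + qk p * qr q).

Definition qnorm (q : quat) : R :=
  sqrt (qr q ^ 2 + qi q ^ 2 + qj q ^ 2 + qk q ^ 2).

Fixpoint qpow (q : quat) (k : nat) : quat :=
  match k with
  | O => qone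
  | S k' => qmul q (qpow q k')
  end.

(* p(q) = q^n + sum_{j=0}^{n-2} a_j q^j, coefficients on the left *)
Definition peval (n : nat) (a : nat -> quat) (q : quat) : quat :=
  qadd (qpow q n)
       (fold_right qadd qzero (map (fun j => qmul (a j) (qpow q j)) (seq 0 (n - 1)))).

Definition maxcoef (n : nat) (a : nat -> quat) : R :=
  fold_right Rmax 0 (map (fun j => qnorm (a j)) (seq 0 (n - 1))).

(** With [r = |q|] and [M = max |a_j| = λ^n], taking norms in [q^n = -Σ a_j q^j]
    gives the Cauchy-type inequality [r^n <= Σ_{j<n-1} λ^n r^j].  If [r <= λ] we are
    done, since [T = Σ_{j<n-1} λ^j >= 1].  Otherwise [λ^(n-1-j) r^j <= r^(n-1)], so
    [r^n <= λ T r^(n-1)], i.e. [r <= λ T = λ + ... + λ^(n-1)]. *)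

From Stdlib Require Import Reals List Lra Lia.
Open Scope R_scope.

Definition rsum {A : Type} (f : A -> R) (l : list A) : R :=
  fold_right Rplus 0 (map f l).

Lemma rsum_le {A : Type} (f g : A -> R) (l : list A) :
  (forall x, In x l -> f x <= g x) -> rsum f l <= rsum g l.
Proof.
  unfold rsum; induction l as [|x l IH]; simpl; intros H; [lra|].
  assert (f x <= g x) by auto.
  assert (fold_right Rplus 0 (map f l) <= fold_right Rplus 0 (map g l)) by auto.
  lra.
Qed.

Lemma rsum_nonneg {A : Type} (f : A -> R) (l : list A) :
  (forall x, In x l -> 0 <= f x) -> 0 <= rsum f l.
Proof.
  unfold rsum; induction l as [|x l IH]; simpl; intros H; [lra|].
  assert (0 <= f x) by auto.
  assert (0 <= fold_right Rplus 0 (map f l)) by auto.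
  lra.
Qed.

Lemma rsum_scal {A : Type} (c : R) (f : A -> R) (l : list A) :
  c * rsum f l = rsum (fun x => c * f x) l.
Proof. unfold rsum; induction l as [|x l IH]; simpl; [ring | rewrite <- IH; ring]. Qed.

Lemma rsum_pow_ge1 (lam : R) (m : nat) :
  0 <= lam -> (0 < m)%nat -> 1 <= rsum (pow lam) (seq 0 m).
Proof.
  intros Hlam Hm. destruct m as [|m]; [lia|].
  assert (0 <= rsum (pow lam) (seq 1 m))
    by (apply rsum_nonneg; intros; apply pow_le; assumption).
  unfold rsum in *; simpl. lra.
Qed.

Lemma root_bound_of_pow_le (lam r : R) (m : nat) :
  0 <= lam -> 0 <= r -> (0 < m)%nat ->
  r ^ S m <= rsum (fun j => lam ^ S m * r ^ j) (seq 0 m) ->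
  r <= lam * rsum (pow lam) (seq 0 m).
Proof.
  intros Hlam Hr Hm Hroot.
  set (T := rsum (pow lam) (seq 0 m)).
  assert (HT : 1 <= T) by (apply rsum_pow_ge1; assumption).
  destruct (Rle_dec r lam) as [Hle | Hgt]; [nra|].
  apply Rnot_le_lt in Hgt.
  assert (Hterm : forall j, In j (seq 0 m) ->
                  lam ^ S m * r ^ j <= lam * r ^ m * lam ^ j).
  { intros j Hj. apply in_seq in Hj.
    replace m with (j + (m - j))%nat at 1 2 by lia.
    rewrite <- tech_pow_Rmult, !pow_add.
    assert (lam ^ (m - j) <= r ^ (m - j)) by (apply pow_incr; lra).
    assert (0 <= lam * lam ^ j * r ^ j)
      by (apply Rmult_le_pos; [apply Rmult_le_pos|]; auto using pow_le).
    replace (lam * (lam ^ j * lam ^ (m - j)) * r ^ j)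
      with (lam * lam ^ j * r ^ j * lam ^ (m - j)) by ring.
    replace (lam * (r ^ j * r ^ (m - j)) * lam ^ j)
      with (lam * lam ^ j * r ^ j * r ^ (m - j)) by ring.
    apply Rmult_le_compat_l; assumption. }
  assert (Hsum : r * r ^ m <= (lam * T) * r ^ m).
  { change (r ^ S m <= lam * T * r ^ m). eapply Rle_trans; [exact Hroot|].
    eapply Rle_trans; [apply rsum_le; exact Hterm|].
    rewrite <- rsum_scal. fold T. lra. }
  apply Rmult_le_reg_r with (r ^ m); [apply pow_lt; lra | exact Hsum].
Qed.

Lemma qnorm_nonneg (q : quat) : 0 <= qnorm q.
Proof. apply sqrt_pos. Qed.

Lemma qnorm_pos (q : quat) : q <> qzero -> 0 < qnorm q.
Proof.
  destruct q as [a b c d]; unfold qnorm, qzero; simpl; intros Hq.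
  apply sqrt_lt_R0.
  destruct (Rlt_dec 0 (a ^ 2 + b ^ 2 + c ^ 2 + d ^ 2)) as [|Hn]; [assumption|].
  exfalso; apply Hq.
  assert (a = 0) by nra; assert (b = 0) by nra; assert (c = 0) by nra;
    assert (d = 0) by nra.
  subst; reflexivity.
Qed.

Lemma qnorm_zero : qnorm qzero = 0.
Proof.
  unfold qnorm; simpl.
  replace (0 * (0 * 1) + 0 * (0 * 1) + 0 * (0 * 1) + 0 * (0 * 1)) with 0 by ring.
  apply sqrt_0.
Qed.

Lemma qnorm_one : qnorm qone = 1.
Proof.
  unfold qnorm; simpl.
  replace (1 * (1 * 1) + 0 * (0 * 1) + 0 * (0 * 1) + 0 * (0 * 1)) with 1 by ring.
  apply sqrt_1.
Qed.

(* Euler's four-square identity. *)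
Lemma qnorm_mul (p q : quat) : qnorm (qmul p q) = qnorm p * qnorm q.
Proof.
  destruct p as [a b c d], q as [e f g h]; unfold qnorm; simpl.
  rewrite <- sqrt_mult by nra. f_equal. ring.
Qed.

Lemma qnorm_pow (q : quat) (k : nat) : qnorm (qpow q k) = qnorm q ^ k.
Proof.
  induction k as [|k IH]; simpl; [apply qnorm_one | rewrite qnorm_mul, IH; reflexivity].
Qed.

(* Lagrange's identity: [|x|^2 |y|^2 - (x.y)^2] is a sum of six squares. *)
Lemma dot4_le_sqrt (a b c d e f g h : R) :
  a * e + b * f + c * g + d * h <=
  sqrt (a ^ 2 + b ^ 2 + c ^ 2 + d ^ 2) * sqrt (e ^ 2 + f ^ 2 + g ^ 2 + h ^ 2).
Proof.
  set (D := a * e + b * f + c * g + d * h).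
  destruct (Rle_dec D 0).
  - pose proof (sqrt_pos (a ^ 2 + b ^ 2 + c ^ 2 + d ^ 2));
      pose proof (sqrt_pos (e ^ 2 + f ^ 2 + g ^ 2 + h ^ 2)); nra.
  - rewrite <- sqrt_mult by nra. rewrite <- (sqrt_square D) by lra.
    apply sqrt_le_1_alt. unfold D.
    pose proof (pow2_ge_0 (a * f - b * e)); pose proof (pow2_ge_0 (a * g - c * e));
      pose proof (pow2_ge_0 (a * h - d * e)); pose proof (pow2_ge_0 (b * g - c * f));
      pose proof (pow2_ge_0 (b * h - d * f)); pose proof (pow2_ge_0 (c * h - d * g)).
    nra.
Qed.

Lemma qnorm_add (p q : quat) : qnorm (qadd p q) <= qnorm p + qnorm q.
Proof.
  destruct p as [a b c d], q as [e f g h]; unfold qnorm, qadd; simpl qr; simpl qi;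
    simpl qj; simpl qk.
  set (A := a ^ 2 + b ^ 2 + c ^ 2 + d ^ 2).
  set (B := e ^ 2 + f ^ 2 + g ^ 2 + h ^ 2).
  assert (HA : 0 <= A) by (unfold A; nra).
  assert (HB : 0 <= B) by (unfold B; nra).
  pose proof (dot4_le_sqrt a b c d e f g h) as Hdot; fold A B in Hdot.
  pose proof (sqrt_pos A); pose proof (sqrt_pos B).
  rewrite <- (sqrt_square (sqrt A + sqrt B)) by lra.
  apply sqrt_le_1_alt.
  replace ((sqrt A + sqrt B) * (sqrt A + sqrt B))
    with (sqrt A * sqrt A + sqrt B * sqrt B + 2 * (sqrt A * sqrt B)) by ring.
  rewrite !sqrt_sqrt by lra.
  unfold A, B in *. nra.
Qed.

Lemma qnorm_sum {A : Type} (F : A -> quat) (l : list A) :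
  qnorm (fold_right qadd qzero (map F l)) <= rsum (fun x => qnorm (F x)) l.
Proof.
  unfold rsum; induction l as [|x l IH]; simpl; [rewrite qnorm_zero; lra|].
  eapply Rle_trans; [apply qnorm_add | lra].
Qed.

Lemma qnorm_eq_of_qadd_eq0 (p q : quat) : qadd p q = qzero -> qnorm p = qnorm q.
Proof.
  destruct p as [a b c d], q as [e f g h]; unfold qadd, qzero, qnorm; simpl.
  intros Hpq; injection Hpq; intros. f_equal.
  replace a with (- e) by lra; replace b with (- f) by lra;
    replace c with (- g) by lra; replace d with (- h) by lra.
  ring.
Qed.

Lemma qnorm_root_pow_le (n : nat) (a : nat -> quat) (q : quat) :
  peval n a q = qzero ->
  qnorm q ^ n <= rsum (fun j => qnorm (a j) * qnorm q ^ j) (seq 0 (n - 1)).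
Proof.
  unfold peval; intros Hroot.
  apply qnorm_eq_of_qadd_eq0 in Hroot. rewrite qnorm_pow in Hroot. rewrite Hroot.
  eapply Rle_trans; [apply qnorm_sum|].
  apply rsum_le; intros j _. rewrite qnorm_mul, qnorm_pow. lra.
Qed.

Lemma qnorm_le_maxcoef (n : nat) (a : nat -> quat) (j : nat) :
  In j (seq 0 (n - 1)) -> qnorm (a j) <= maxcoef n a.
Proof.
  unfold maxcoef; induction (seq 0 (n - 1)) as [|k l IH]; simpl; [tauto|].
  intros [-> | Hj]; [apply Rmax_l | eapply Rle_trans; [apply IH, Hj | apply Rmax_r]].
Qed.

Lemma Rpower_inv_pow (x : R) (n : nat) :
  0 < x -> (0 < n)%nat -> Rpower x (/ INR n) ^ n = x.
Proof.
  intros Hx Hn.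
  rewrite <- Rpower_pow by (unfold Rpower; apply exp_pos).
  rewrite Rpower_mult, Rinv_l by (apply not_0_INR; lia).
  apply Rpower_1, Hx.
Qed.

Theorem corollary2 (n : nat) (a : nat -> quat) (q : quat) :
  (3 <= n)%nat ->
  a (n - 2)%nat <> qzero ->
  peval n a q = qzero ->
  let lam := Rpower (maxcoef n a) (/ INR n) in
  qnorm q <= fold_right Rplus 0 (map (fun k => lam ^ k) (seq 1 (n - 1))).
Proof.
  intros Hn Ha Hroot lam.
  assert (HM : 0 < maxcoef n a).
  { eapply Rlt_le_trans; [apply qnorm_pos, Ha | apply qnorm_le_maxcoef, in_seq; lia]. }
  assert (Hlam_n : lam ^ n = maxcoef n a) by (apply Rpower_inv_pow; [exact HM | lia]).
  assert (Hlam : 0 <= lam) by (left; unfold lam, Rpower; apply exp_pos).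
  pose proof (qnorm_root_pow_le n a q Hroot) as Hcauchy.
  destruct n as [|m]; [lia|]. replace (S m - 1)%nat with m in * by lia.
  rewrite <- seq_shift, map_map.
  change (qnorm q <= rsum (fun j => lam * lam ^ j) (seq 0 m)).
  rewrite <- rsum_scal.
  apply root_bound_of_pow_le; [exact Hlam | apply qnorm_nonneg | lia |].
  eapply Rle_trans; [exact Hcauchy|].
  apply rsum_le; intros j Hj. rewrite Hlam_n.
  apply Rmult_le_compat_r; [apply pow_le, qnorm_nonneg|].
  apply qnorm_le_maxcoef. replace (S m - 1)%nat with m by lia. exact Hj.
Qed.
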